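(* Let $K_{w,F}$ be an allowed folded ribbon unknot whose knot diagram $K$ is a nondegenerate triangle (a 3-stick unknot) and such that the folds at all three vertices are of the same type. Then $\frac{w}{2}\le r_{in}$, where $r_{in}$ is the inradius of the triangle $K$.
   Context: For an oriented polygonal knot diagram $K$ with vertices $v_1,v_2,v_3$ and edges $e_i=[v_i,v_{i+1}]$ (indices mod 3), the fold angle $\theta_i\in[0,\pi]$ at $v_i$ is the angle between $e_{i-1}$ and $e_i$. The folded ribbon $K_w$ of width $w$ is built by placing at each $v_i$ a fold line of length $w/\cos(\theta_i/2)$ centered at $v_i$ perpendicular to the bisector of $\theta_i$, and joining ends of consecutive fold lines by boundary segments parallel to and at distance $w/2$ from $K$ (so the ribbon along each edge is the strip of points within distance $w/2$ of the edge's line, bounded by the fold lines). Folding information $F$ records at each vertex whether the ribbon of $e_i$ lies over (overfold) or under (underfold) the ribbon of $e_{i-1}$; the folds are of the same type if all are overfolds or all are underfolds. $K_{w,F}$ is allowed if the ribbon is immersed away from the fold lines and admits a choice of crossing information (a continuous, antisymmetric, transitive $\pm1$-valued function on pairs of distinct points of the ribbon with the same image in the plane, recording which lies over which) agreeing with $F$. *)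

From Stdlib Require Import Reals Lra ZArith.
Open Scope R_scope.

Definition pt := (R * R)%type.
Definition vsub (p q : pt) : pt := (fst p - fst q, snd p - snd q).
Definition vadd (p q : pt) : pt := (fst p + fst q, snd p + snd q).
Definition vscale (a : R) (p : pt) : pt := (a * fst p, a * snd p).
Definition dot (p q : pt) : R := fst p * fst q + snd p * snd q.
Definition cross (p q : pt) : R := fst p * snd q - snd p * fst q.
Definition vnorm (p : pt) : R := sqrt (dot p p).
Definition dist (p q : pt) : R := vnorm (vsub p q).
Definition unitv (p : pt) : pt := vscale (/ vnorm p) p.
Definition perp (p : pt) : pt := (- snd p, fst p).
Definition dist_line (a b p : pt) : R :=
  Rabs (cross (vsub b a) (vsub p a)) / vnorm (vsub b a).

Inductive idx := I0 | I1 | I2.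
Definition nxt (i : idx) : idx := match i with I0 => I1 | I1 => I2 | I2 => I0 end.
Definition prv (i : idx) : idx := match i with I0 => I2 | I1 => I0 | I2 => I1 end.

(* A triangular knot diagram K with vertices v I0, v I1, v I2, oriented
   v1 -> v2 -> v3 -> v1; edge e_i = [v i, v (nxt i)]. *)
Definition nondegenerate (v : idx -> pt) : Prop :=
  cross (vsub (v I1) (v I0)) (vsub (v I2) (v I0)) <> 0.

Definition fold_angle (v : idx -> pt) (i : idx) : R :=
  let a := vsub (v (prv i)) (v i) in
  let b := vsub (v (nxt i)) (v i) in
  acos (dot a b / (vnorm a * vnorm b)).

Definition bisector (v : idx -> pt) (i : idx) : pt :=
  vadd (unitv (vsub (v (prv i)) (v i))) (unitv (vsub (v (nxt i)) (v i))).

Definition fold_dir (v : idx -> pt) (i : idx) : pt := unitv (perp (bisector v i)).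

Definition fold_line (v : idx -> pt) (w : R) (i : idx) (p : pt) : Prop :=
  exists t, Rabs t <= w / (2 * cos (fold_angle v i / 2)) /\
            p = vadd (v i) (vscale t (fold_dir v i)).

Definition on_fold_carrier (v : idx -> pt) (i : idx) (p : pt) : Prop :=
  dot (vsub p (v i)) (bisector v i) = 0.

(* The piece of the ribbon along edge e_i: points within distance w/2 of the
   line of e_i, bounded by the fold lines at v_i and v_{i+1}
   (on the side of each fold line containing the edge). *)
Definition piece (v : idx -> pt) (w : R) (i : idx) (p : pt) : Prop :=
  dist_line (v i) (v (nxt i)) p <= w / 2 /\
  0 <= dot (vsub p (v i)) (bisector v i) /\
  0 <= dot (vsub p (v (nxt i))) (bisector v (nxt i)).

(* Points of the abstract ribbon: (i, p) with p in the piece of edge e_i. *)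
Definition rpt := (idx * pt)%type.
Definition in_ribbon (v : idx -> pt) (w : R) (x : rpt) : Prop :=
  piece v w (fst x) (snd x).
Definition image (x : rpt) : pt := snd x.

(* Gluing: the piece of e_i and the piece of e_{i+1} are joined along the
   fold line at v_{i+1}. *)
Definition same_rpt (v : idx -> pt) (x y : rpt) : Prop :=
  snd x = snd y /\
  (fst x = fst y \/
   (fst y = nxt (fst x) /\ on_fold_carrier v (fst y) (snd x)) \/
   (fst x = nxt (fst y) /\ on_fold_carrier v (fst x) (snd x))).

Definition double_pt (v : idx -> pt) (w : R) (x y : rpt) : Prop :=
  in_ribbon v w x /\ in_ribbon v w y /\ image x = image y /\ ~ same_rpt v x y.

(* neighbourhood of radius d of a ribbon point (quotient topology) *)
Definition rnear (v : idx -> pt) (d : R) (x x' : rpt) : Prop :=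
  exists x0, same_rpt v x x0 /\ fst x0 = fst x' /\ dist (snd x0) (snd x') < d.

(* Crossing information: c x y = 1 means x lies over y, -1 means under. *)
Definition crossing_info (v : idx -> pt) (w : R) (c : rpt -> rpt -> Z) : Prop :=
  (* well defined on the ribbon (compatible with the gluing) *)
  (forall x x' y y', double_pt v w x y -> in_ribbon v w x' -> in_ribbon v w y' ->
     same_rpt v x x' -> same_rpt v y y' -> c x y = c x' y') /\
  (forall x y, double_pt v w x y -> c x y = 1%Z \/ c x y = (-1)%Z) /\
  (forall x y, double_pt v w x y -> c y x = (- c x y)%Z) /\
  (forall x y z, double_pt v w x y -> double_pt v w y z -> double_pt v w x z ->
     c x y = 1%Z -> c y z = 1%Z -> c x z = 1%Z) /\
  (forall x y, double_pt v w x y -> exists d, 0 < d /\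
     forall x' y', double_pt v w x' y' -> rnear v d x x' -> rnear v d y y' ->
       c x' y' = c x y).

(* Folding information: F i = true iff the fold at v_i is an overfold, i.e.
   the ribbon of e_i lies over the ribbon of e_{i-1} near the fold line. *)
Definition agrees_with (v : idx -> pt) (w : R) (c : rpt -> rpt -> Z)
    (F : idx -> bool) : Prop :=
  forall i f, fold_line v w i f -> exists d, 0 < d /\
    forall p, dist p f < d -> double_pt v w (i, p) (prv i, p) ->
      c (i, p) (prv i, p) = (if F i then 1%Z else (-1)%Z).

Definition same_type (F : idx -> bool) : Prop := F I0 = F I1 /\ F I1 = F I2.

(* Ribbon immersed away from the fold lines: fold lines have finite length and
   the fold lines at the two ends of each edge do not meet (so each piece is a
   genuine, non self-intersecting quadrilateral). *)
Definition immersed_away_from_folds (v : idx -> pt) (w : R) : Prop :=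
  forall i, fold_angle v i < PI /\
    forall p, ~ (fold_line v w i p /\ fold_line v w (nxt i) p).

Definition allowed (v : idx -> pt) (w : R) (F : idx -> bool) : Prop :=
  0 < w /\ immersed_away_from_folds v w /\
  exists c, crossing_info v w c /\ agrees_with v w c F.

(* r is the inradius of the triangle: radius of the circle inscribed in the
   triangle, i.e. tangent to the three side lines with centre in the interior. *)
Definition inradius (v : idx -> pt) (r : R) : Prop :=
  exists a0 a1 a2 : R, 0 < a0 /\ 0 < a1 /\ 0 < a2 /\ a0 + a1 + a2 = 1 /\
    let c := vadd (vscale a0 (v I0)) (vadd (vscale a1 (v I1)) (vscale a2 (v I2))) in
    forall i, dist_line (v i) (v (nxt i)) c = r.

From Stdlib Require Import Reals Lra Lia ZArith Classical.
Open Scope R_scope.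

(* Suppose [w/2 > r] and let [o] be the incentre. Each point of the segment from [v_i] to
   [o] other than [v_i] is at distance less than [w/2] from both sides through [v_i] and lies
   strictly inside the angle at [v_i], so the ribbon pieces of [e_(i-1)] and [e_i] overlap
   there. Near [v_i] their crossing is prescribed by the fold, so by continuity of the
   crossing information the piece of [e_i] lies over (for underfolds, under) that of
   [e_(i-1)] at [o], for every [i]. These three relations form a cycle, which transitivity
   forbids. *)

Ltac pt_ring :=
  apply injective_projections; simpl; ring.

Lemma nxt_prv i : nxt (prv i) = i. Proof. destruct i; reflexivity. Qed.
Lemma prv_nxt i : prv (nxt i) = i. Proof. destruct i; reflexivity. Qed.
Lemma nxt_nxt i : nxt (nxt i) = prv i. Proof. destruct i; reflexivity. Qed.
Lemma prv_prv i : prv (prv i) = nxt i. Proof. destruct i; reflexivity. Qed.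

Lemma dot_self_nonneg p : 0 <= dot p p.
Proof. unfold dot; nra. Qed.

Lemma vnorm_sqr p : vnorm p * vnorm p = dot p p.
Proof. apply sqrt_sqrt, dot_self_nonneg. Qed.

Lemma vnorm_scale k p : vnorm (vscale k p) = Rabs k * vnorm p.
Proof.
  unfold vnorm, vscale, dot; simpl.
  replace (k * fst p * (k * fst p) + k * snd p * (k * snd p))
    with (Rsqr k * (fst p * fst p + snd p * snd p)) by (unfold Rsqr; ring).
  rewrite sqrt_mult, sqrt_Rsqr_abs; [reflexivity | apply Rle_0_sqr | nra].
Qed.

Lemma cross_swap p q : cross q p = - cross p q.
Proof. unfold cross; ring. Qed.

Lemma lagrange_identity p q :
  dot p q * dot p q + cross p q * cross p q = dot p p * dot q q.
Proof. unfold dot, cross; ring. Qed.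

Lemma vnorm_pos_of_cross p q : cross p q <> 0 -> 0 < vnorm p.
Proof.
  intro H. apply sqrt_lt_R0. unfold cross, dot in *.
  destruct (Req_dec (fst p) 0) as [E1|E1]; [destruct (Req_dec (snd p) 0) as [E2|E2]|].
  - exfalso; apply H; rewrite E1, E2; ring.
  - nra.
  - nra.
Qed.

(* [|p| + <p, q>/|q| = |p| (1 + cos(p, q))], positive unless [q] points against [p]. *)
Lemma vnorm_add_proj_pos p q : cross p q <> 0 -> 0 < vnorm p + dot p q / vnorm q.
Proof.
  intro H.
  assert (Hq : 0 < vnorm q).
  { apply (vnorm_pos_of_cross q p). rewrite cross_swap. lra. }
  pose proof (vnorm_pos_of_cross p q H) as Hp.
  pose proof (lagrange_identity p q) as Hl.
  rewrite <- (vnorm_sqr p), <- (vnorm_sqr q) in Hl.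
  assert (0 < cross p q * cross p q) by (apply Rsqr_pos_lt; exact H).
  assert (Hd : - (vnorm p * vnorm q) < dot p q).
  { apply Rnot_le_lt; intro Hle.
    assert (0 < vnorm p * vnorm q) by (apply Rmult_lt_0_compat; lra).
    assert (0 <= (- dot p q - vnorm p * vnorm q) * (- dot p q + vnorm p * vnorm q))
      by (apply Rmult_le_pos; lra).
    nra. }
  apply Rmult_lt_reg_r with (vnorm q); [exact Hq|].
  unfold Rdiv. rewrite Rmult_plus_distr_r, Rmult_assoc, Rinv_l; lra.
Qed.

Lemma dot_cone_bisector_pos p q b c :
  cross p q <> 0 -> 0 <= b -> 0 <= c -> 0 < b + c ->
  0 < dot (vadd (vscale b p) (vscale c q)) (vadd (unitv p) (unitv q)).
Proof.
  intros H Hb Hc Hbc.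
  assert (Hqp : cross q p <> 0) by (rewrite cross_swap; lra).
  pose proof (vnorm_pos_of_cross p q H) as Hp.
  pose proof (vnorm_pos_of_cross q p Hqp) as Hq.
  pose proof (vnorm_add_proj_pos p q H) as Ap.
  pose proof (vnorm_add_proj_pos q p Hqp) as Aq.
  assert (E : dot (vadd (vscale b p) (vscale c q)) (vadd (unitv p) (unitv q)) =
              b * (vnorm p + dot p q / vnorm q) + c * (vnorm q + dot q p / vnorm p)).
  { assert (Np : vnorm p = dot p p / vnorm p) by (rewrite <- vnorm_sqr; field; lra).
    assert (Nq : vnorm q = dot q q / vnorm q) by (rewrite <- vnorm_sqr; field; lra).
    transitivity (b * (dot p p / vnorm p + dot p q / vnorm q)
                  + c * (dot q q / vnorm q + dot q p / vnorm p)).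
    - unfold dot, unitv, vadd, vscale; simpl. field. lra.
    - rewrite <- Np, <- Nq. reflexivity. }
  rewrite E. destruct (Rlt_dec 0 b); nra.
Qed.

Definition homothety (X : pt) (s : R) (q : pt) : pt := vadd X (vscale s (vsub q X)).

Definition bary (a b c : R) (X Y Z : pt) : pt :=
  vadd (vscale a X) (vadd (vscale b Y) (vscale c Z)).

Lemma homothety_0 X q : homothety X 0 q = X.
Proof. unfold homothety, vadd, vscale, vsub; pt_ring. Qed.

Lemma homothety_1 X q : homothety X 1 q = q.
Proof. unfold homothety, vadd, vscale, vsub; pt_ring. Qed.

Lemma dist_homothety X q s t :
  dist (homothety X s q) (homothety X t q) = Rabs (s - t) * dist q X.
Proof.
  unfold dist. rewrite <- vnorm_scale. f_equal.
  unfold homothety, vadd, vscale, vsub; pt_ring.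
Qed.

Lemma bary_at_vertex (v : idx -> pt) a0 a1 a2 i :
  0 < a0 -> 0 < a1 -> 0 < a2 -> a0 + a1 + a2 = 1 ->
  exists a b g, 0 < a /\ 0 < b /\ 0 < g /\ a + b + g = 1 /\
    bary a0 a1 a2 (v I0) (v I1) (v I2) = bary a b g (v i) (v (nxt i)) (v (prv i)).
Proof.
  intros; destruct i;
    [exists a0, a1, a2 | exists a1, a2, a0 | exists a2, a0, a1];
    (split; [|split; [|split; [|split]]]; [assumption .. | lra | unfold bary, vadd, vscale; pt_ring]).
Qed.

Lemma dist_line_homothety a b X q s :
  cross (vsub b a) (vsub X a) = 0 -> 0 <= s ->
  dist_line a b (homothety X s q) = s * dist_line a b q.
Proof.
  intros HX Hs. unfold dist_line.
  replace (cross (vsub b a) (vsub (homothety X s q) a))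
    with (s * cross (vsub b a) (vsub q a) + (1 - s) * cross (vsub b a) (vsub X a))
    by (unfold cross, homothety, vadd, vscale, vsub; simpl; ring).
  rewrite HX, Rmult_0_r, Rplus_0_r, Rabs_mult, (Rabs_pos_eq s Hs).
  unfold Rdiv; ring.
Qed.

Lemma nondegenerate_at v j :
  nondegenerate v -> cross (vsub (v (prv j)) (v j)) (vsub (v (nxt j)) (v j)) <> 0.
Proof.
  unfold nondegenerate; intros H E; apply H.
  assert (Hj : cross (vsub (v I1) (v I0)) (vsub (v I2) (v I0))
               = - cross (vsub (v (prv j)) (v j)) (vsub (v (nxt j)) (v j)))
    by (destruct j; unfold cross, vsub; simpl; ring).
  rewrite Hj, E; ring.
Qed.

Lemma bisector_dot_pos v j a b c :
  nondegenerate v -> a + b + c = 1 -> 0 <= b -> 0 <= c -> 0 < b + c ->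
  0 < dot (vsub (bary a b c (v j) (v (prv j)) (v (nxt j))) (v j)) (bisector v j).
Proof.
  intros Hnd Habc Hb Hc Hbc.
  replace (vsub (bary a b c (v j) (v (prv j)) (v (nxt j))) (v j))
    with (vadd (vscale b (vsub (v (prv j)) (v j))) (vscale c (vsub (v (nxt j)) (v j))))
    by (replace a with (1 - b - c) by lra; unfold bary, vadd, vscale, vsub; pt_ring).
  exact (dot_cone_bisector_pos _ _ b c (nondegenerate_at v j Hnd) Hb Hc Hbc).
Qed.

Lemma fold_line_vertex v w i :
  0 < w -> fold_angle v i < PI -> fold_line v w i (v i).
Proof.
  intros Hw Hpi. exists 0. split.
  - rewrite Rabs_R0. apply Rlt_le, Rdiv_lt_0_compat; [exact Hw|].
    unfold fold_angle in *; cbv zeta in *; set (theta := acos _) in *.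
    assert (0 <= theta) by apply acos_bound.
    assert (0 < cos (theta / 2)) by (apply cos_gt_0; lra).
    lra.
  - unfold vadd, vscale; pt_ring.
Qed.

Lemma locally_constant_on_unit_interval {A : Type} (g : R -> A) (a : A) (e0 : R) :
  0 < e0 ->
  (forall s, 0 < s <= 1 -> s < e0 -> g s = a) ->
  (forall s, 0 < s <= 1 -> exists e, 0 < e /\
     forall t, 0 < t <= 1 -> Rabs (t - s) < e -> g t = g s) ->
  forall s, 0 < s <= 1 -> g s = a.
Proof.
  intros He0 Hnear Hloc.
  set (E := fun s => s <= 1 /\ forall u, 0 < u <= s -> g u = a).
  assert (HE1 : is_upper_bound E 1) by (intros s [Hs _]; exact Hs).
  destruct (completeness E) as [T [HT HTmin]].
  { exists 1; exact HE1. }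
  { exists 0; split; [lra | intros; lra]. }
  assert (HT1 : T <= 1) by (apply HTmin, HE1).
  assert (HT0 : 0 < T).
  { pose proof (Rmin_l (e0 / 2) 1); pose proof (Rmin_r (e0 / 2) 1).
    pose proof (Rmin_pos (e0 / 2) 1 ltac:(lra) ltac:(lra)).
    assert (Em : E (Rmin (e0 / 2) 1)) by (split; [lra | intros u Hu; apply Hnear; lra]).
    pose proof (HT _ Em); lra. }
  destruct (Hloc T (conj HT0 HT1)) as [e [He HgT]].
  pose proof (Rmin_l e T); pose proof (Rmin_r e T); pose proof (Rmin_pos e T He HT0).
  assert (Hs : exists s, E s /\ T - Rmin e T < s).
  { apply NNPP; intro N.
    assert (T <= T - Rmin e T); [|lra].
    apply HTmin; intros s Hs; apply Rnot_lt_le; intro; apply N; eauto. }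
  destruct Hs as [s [[Hs1 Hs] HsT]].
  assert (s <= T) by (apply HT; split; assumption).
  assert (HgTa : g T = a) by (rewrite <- (HgT s); [apply Hs | | apply Rabs_def1]; lra).
  assert (Hbeyond : E (Rmin (T + e / 2) 1)).
  { pose proof (Rmin_l (T + e / 2) 1); pose proof (Rmin_r (T + e / 2) 1).
    split; [lra|]. intros u Hu.
    destruct (Rle_dec u s); [apply Hs; lra|].
    rewrite HgT; [exact HgTa | lra | apply Rabs_def1; lra]. }
  destruct (Rle_dec (T + e / 2) 1).
  - rewrite Rmin_left in Hbeyond by lra. pose proof (HT _ Hbeyond). lra.
  - rewrite Rmin_right in Hbeyond by lra. apply Hbeyond.
Qed.

Lemma lt_div_succ_mul x L d : 0 <= L -> 0 <= x -> x < d / (L + 1) -> x * L < d.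
Proof.
  intros HL Hx Hlt.
  apply Rmult_lt_compat_r with (r := L + 1) in Hlt; [|lra].
  unfold Rdiv in Hlt; rewrite Rmult_assoc, Rinv_l, Rmult_1_r in Hlt; nra.
Qed.

Lemma same_rpt_refl v x : same_rpt v x x.
Proof. split; [reflexivity | left; reflexivity]. Qed.

Lemma rnear_of_dist v d i p q : dist p q < d -> rnear v d (i, p) (i, q).
Proof. intro H. exists (i, p). split; [apply same_rpt_refl | split; [reflexivity | exact H]]. Qed.

Lemma double_pt_sym v w x y : double_pt v w x y -> double_pt v w y x.
Proof.
  intros [Hx [Hy [Hxy Hns]]]. split; [exact Hy | split; [exact Hx | split; [congruence |]]].
  intros [E Hs]; apply Hns. split; [congruence|].
  destruct Hs as [H | [[H1 H2] | [H1 H2]]]; [left; congruence | right; right | right; left];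
    rewrite <- E; auto.
Qed.

Lemma crossing_info_no_cycle v w c x y z :
  crossing_info v w c ->
  double_pt v w x y -> double_pt v w y z -> double_pt v w z x ->
  c x y = c y z -> c y z = c z x -> False.
Proof.
  intros [_ [Hpm [Hanti [Htr _]]]] Dxy Dyz Dzx E1 E2.
  pose proof (Hanti _ _ Dxy) as Ayx; pose proof (Hanti _ _ Dyz) as Azy;
  pose proof (Hanti _ _ Dzx) as Axz.
  destruct (Hpm _ _ Dxy) as [H | H].
  - pose proof (Htr _ _ _ Dxy Dyz (double_pt_sym _ _ _ _ Dzx) H ltac:(congruence)). lia.
  - pose proof (Htr _ _ _ (double_pt_sym _ _ _ _ Dyz) (double_pt_sym _ _ _ _ Dxy) Dzx
                  ltac:(lia) ltac:(lia)). lia.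
Qed.

Section IncenterCrossing.

Variables (v : idx -> pt) (w r : R) (c : rpt -> rpt -> Z) (F : idx -> bool) (o : pt).

Hypothesis Hnd : nondegenerate v.
Hypothesis Hw : 0 < w.
Hypothesis Himm : immersed_away_from_folds v w.
Hypothesis Hc : crossing_info v w c.
Hypothesis HF : agrees_with v w c F.
Hypothesis Ho : forall i, exists a b g, 0 < a /\ 0 < b /\ 0 < g /\ a + b + g = 1 /\
  o = bary a b g (v i) (v (nxt i)) (v (prv i)).
Hypothesis Hdist : forall j, dist_line (v j) (v (nxt j)) o = r.
Hypothesis Hr : r < w / 2.

Lemma incenter_segment_double_pt i s :
  0 < s <= 1 -> double_pt v w (i, homothety (v i) s o) (prv i, homothety (v i) s o).
Proof.
  intros Hs.
  destruct (Ho i) as [a [b [g [Ha [Hb [Hg [Hsum Hoi]]]]]]].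
  assert (Ea : a = 1 - b - g) by lra; subst a.
  set (p := homothety (v i) s o).
  assert (Hsr : s * r <= w / 2) by (destruct (Rle_dec 0 r); nra).
  assert (Hi : 0 < dot (vsub p (v i)) (bisector v i)).
  { replace p with (bary (1 - s * b - s * g) (s * g) (s * b) (v i) (v (prv i)) (v (nxt i)))
      by (unfold p; rewrite Hoi; unfold homothety, bary, vadd, vscale, vsub; pt_ring).
    apply bisector_dot_pos; auto; nra. }
  assert (Hnxt : 0 < dot (vsub p (v (nxt i))) (bisector v (nxt i))).
  { replace p with (bary (s * b) (1 - s * b - s * g) (s * g)
                      (v (nxt i)) (v (prv (nxt i))) (v (nxt (nxt i))))
      by (rewrite prv_nxt, nxt_nxt; unfold p; rewrite Hoi;
          unfold homothety, bary, vadd, vscale, vsub; pt_ring).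
    apply bisector_dot_pos; auto; nra. }
  assert (Hprv : 0 < dot (vsub p (v (prv i))) (bisector v (prv i))).
  { replace p with (bary (s * g) (s * b) (1 - s * b - s * g)
                      (v (prv i)) (v (prv (prv i))) (v (nxt (prv i))))
      by (rewrite prv_prv, nxt_prv; unfold p; rewrite Hoi;
          unfold homothety, bary, vadd, vscale, vsub; pt_ring).
    apply bisector_dot_pos; auto; nra. }
  split; [|split; [|split]].
  - split; [|split; simpl; lra].
    simpl; unfold p; rewrite dist_line_homothety, Hdist; [exact Hsr | | lra].
    unfold cross, vsub; simpl; ring.
  - unfold in_ribbon, piece; simpl; rewrite nxt_prv.
    split; [|split; lra].
    pose proof (Hdist (prv i)) as Hd; rewrite nxt_prv in Hd.
    unfold p; rewrite dist_line_homothety, Hd; [exact Hsr | | lra].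
    unfold cross, vsub; simpl; ring.
  - reflexivity.
  - intros [_ [E | [[E _] | [_ E]]]]; simpl in E;
      [destruct i; discriminate | destruct i; discriminate | unfold on_fold_carrier in E; lra].
Qed.

Lemma incenter_double_pt i : double_pt v w (i, o) (prv i, o).
Proof.
  rewrite <- (homothety_1 (v i) o). apply incenter_segment_double_pt; lra.
Qed.

(* The fold at [v_i] fixes the crossing near [v_i]; continuity carries it along the
   segment from [v_i] to [o], on which the two ribbon pieces keep overlapping. *)
Lemma incenter_crossing i : c (i, o) (prv i, o) = (if F i then 1%Z else (-1)%Z).
Proof.
  destruct Hc as [_ [_ [_ [_ Hcont]]]].
  set (L := dist o (v i)).
  assert (HL : 0 <= L) by apply sqrt_pos.
  destruct (HF i (v i) (fold_line_vertex v w i Hw (proj1 (Himm i)))) as [d [Hd Hnear]].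
  rewrite <- (homothety_1 (v i) o).
  apply (locally_constant_on_unit_interval
           (fun s => c (i, homothety (v i) s o) (prv i, homothety (v i) s o)) _ (d / (L + 1)));
    [apply Rdiv_lt_0_compat; lra | | | lra].
  - intros s Hs Hsd. apply Hnear; [|apply incenter_segment_double_pt; exact Hs].
    rewrite <- (homothety_0 (v i) o) at 2. rewrite dist_homothety, Rminus_0_r, Rabs_pos_eq by lra.
    fold L; apply lt_div_succ_mul; lra.
  - intros s Hs.
    destruct (Hcont _ _ (incenter_segment_double_pt i s Hs)) as [e [He Hloc]].
    exists (e / (L + 1)). split; [apply Rdiv_lt_0_compat; lra|].
    intros t Ht Hts.
    assert (Hst : dist (homothety (v i) s o) (homothety (v i) t o) < e).
    { rewrite dist_homothety, Rabs_minus_sym. apply lt_div_succ_mul; auto using Rabs_pos. }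
    apply Hloc; [apply incenter_segment_double_pt; exact Ht | |]; apply rnear_of_dist, Hst.
Qed.

End IncenterCrossing.

Theorem theorem5p1 (v : idx -> pt) (w : R) (F : idx -> bool) (r : R) :
  nondegenerate v ->
  allowed v w F ->
  same_type F ->
  inradius v r ->
  w / 2 <= r.
Proof.
  intros Hnd [Hw [Himm [c [Hc HF]]]] [S1 S2] [a0 [a1 [a2 [h0 [h1 [h2 [hs Hdist]]]]]]].
  destruct (Rle_lt_dec (w / 2) r) as [Hle | Hr]; [exact Hle | exfalso].
  set (o := bary a0 a1 a2 (v I0) (v I1) (v I2)).
  assert (Ho := fun i => bary_at_vertex v a0 a1 a2 i h0 h1 h2 hs).
  pose proof (incenter_double_pt v w r o Hnd Hw Ho Hdist Hr) as D.
  pose proof (incenter_crossing v w r c F o Hnd Hw Himm Hc HF Ho Hdist Hr) as C.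
  apply (crossing_info_no_cycle v w c (I1, o) (I0, o) (I2, o) Hc (D I1) (D I0) (D I2)).
  - rewrite (C I1 : c (I1, o) (I0, o) = _), (C I0 : c (I0, o) (I2, o) = _), S1; reflexivity.
  - rewrite (C I0 : c (I0, o) (I2, o) = _), (C I2 : c (I2, o) (I1, o) = _), S1, S2;
      reflexivity.
Qed.
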